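(* Let $t,n\geq 1$ be integers and let $x,y\in\{0,1\}^{tn}$, with coordinates of $y$ indexed $0,1,\ldots,tn-1$. There exists $i<n$ such that $\mathsf{Rot}^{it}(y)<_{\mathrm{lex}}x$ if and only if at least one of the following holds: (1) there exists $w\in L_x$ such that $w$ appears as a contiguous substring of $y$ starting at a coordinate $j$ with $j\equiv 0\pmod t$; (2) there exist strings $w_1,w_2$ such that $w_1w_2\in L_x$, $w_2$ is a prefix of $y$, $w_1$ is a suffix of $y$, and $|w_1|\equiv 0\pmod t$.
   Context: $\mathsf{Rot}^k(y)$ denotes the string obtained from $y$ by cyclically rotating it rightwards by $k$ positions. $<_{\mathrm{lex}}$ is the lexicographic order on binary strings of equal length with $0<1$. For $x\in\{0,1\}^{m}$, the set of witnesses is $L_x=\{s0 : s1\text{ is a prefix of }x\}$. *)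

From mathcomp Require Import all_boot.
Set Implicit Arguments. Unset Strict Implicit. Unset Printing Implicit Defensive.

(* Binary strings are bitseq = seq bool, with false = 0 and true = 1. *)

Definition Rot (k : nat) (y : bitseq) : bitseq := rotr k y.

(* Strict lexicographic order on binary strings (0 < 1); intended for equal lengths. *)
Fixpoint lexlt (a b : bitseq) : bool :=
  match a, b with
  | x :: a', y :: b' => (~~ x && y) || ((x == y) && lexlt a' b')
  | _, _ => false
  end.

Definition inL (x w : bitseq) : Prop :=
  exists s : bitseq, prefix (rcons s true) x /\ w = rcons s false.

Definition occurs_at (w y : bitseq) (j : nat) : Prop :=
  j + size w <= size y /\ take (size w) (drop j y) = w.

(** A rotation of [y] by a multiple of [t] is lexicographically below [x]
    exactly when some witness [s0] of [L_x] (with [s1] a prefix of [x]) is a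
    prefix of that rotation.  Writing the rotation as [rot j y = drop j y ++
    take j y] with [t %| j], such a prefix either lies inside [drop j y],
    i.e. occurs in [y] at the aligned position [j], or it wraps around: it is
    the suffix [drop j y], of length divisible by [t], followed by a prefix
    of [y]. *)

From mathcomp Require Import all_boot.

Set Implicit Arguments.
Unset Strict Implicit.

Lemma lexlt_inL (a x : bitseq) : lexlt a x <-> exists2 w, inL x w & prefix w a.
Proof.
elim: a x => [|b a IH] [|c x] /=; [by split=> // -[_ [[|? ?] [+ ->]]] ..|split].
  case/orP.
    case: b; case: c => //= _; exists [:: false]; rewrite /= ?prefix0s //.
    by exists [::]; rewrite /= prefix0s.
  case/andP=> /eqP <- /IH [_ [s [sx ->]] sa].
  by exists (rcons (b :: s) false); [exists (b :: s) |]; rewrite /= eqxx.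
case=> _ [[|d s] /= [+ ->]].
  by move=> /andP[/eqP <- _] /andP[/eqP <- _].
move=> /andP[/eqP <- sx] /andP[/eqP <- sa].
by rewrite eqxx; apply/orP; right; apply/IH; exists (rcons s false); first by exists s.
Qed.

Lemma size_inL (x w : bitseq) : inL x w -> size w <= size x.
Proof. by case=> s [/size_prefix + ->]; rewrite !size_rcons. Qed.

Lemma exists_Rot_mul (P : bitseq -> Prop) (t n : nat) (y : bitseq) :
  0 < n -> size y = t * n ->
  (exists i, i < n /\ P (Rot (i * t) y)) <->
  (exists j, [/\ j <= size y, t %| j & P (rot j y)]).
Proof.
move=> n_gt0 sy; split.
  case=> i [_ Py]; exists (size y - i * t); split; [exact: leq_subr | | exact: Py].
  by rewrite sy; apply: dvdn_sub; [apply: dvdn_mulr | apply: dvdn_mull].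
case=> j [le_jy /dvdnP [m def_j] Py]; subst j.
have [mt0|mt_gt0] := posnP (m * t).
  by exists 0; split=> //; rewrite /Rot /rotr subn0 rot_size; rewrite mt0 rot0 in Py.
move: mt_gt0; rewrite muln_gt0 => /andP[m_gt0 t_gt0].
have le_mn : m <= n by rewrite -(leq_pmul2r t_gt0) (mulnC n) -sy.
exists (n - m); split; first by rewrite ltn_subrL m_gt0.
rewrite /Rot /rotr; suff -> : size y - (n - m) * t = m * t by [].
by rewrite sy mulnBl [t * n]mulnC subKn // leq_pmul2r.
Qed.

Lemma prefix_rot (w y : bitseq) (j : nat) :
  j <= size y -> size w <= size y ->
  prefix w (rot j y) <->
  occurs_at w y j \/ exists2 w2, prefix w2 y & w = drop j y ++ w2.
Proof.
move=> le_jy le_wy; rewrite /rot /occurs_at.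
have size_d : size (drop j y) = size y - j by rewrite size_drop.
have take_jy k : k <= j -> take k (take j y) = take k y by move=> ?; rewrite take_takel.
split.
  rewrite prefixE take_cat; case: ltnP => [lt_wd /eqP ok | le_dw /eqP <-].
    by left; split=> //; rewrite -leq_subRL // -size_d ltnW.
  right; exists (take (size w - size (drop j y)) (take j y)) => //.
  by rewrite take_jy ?prefix_take // size_d leq_subLR subnK.
case=> [[_ <-] | [w2 w2y def_w]]; first exact/prefix_catl/prefix_take.
subst w; rewrite prefix_catr // eqxx prefixE take_jy; first by rewrite -prefixE.
by move: le_wy; rewrite size_cat size_d -leq_subRL ?leq_subr // subKn.
Qed.

Theorem lemma9 (t n : nat) (x y : bitseq) :
  1 <= t -> 1 <= n -> size x = t * n -> size y = t * n ->
  (exists i, i < n /\ lexlt (Rot (i * t) y) x) <->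
  ((exists w j, inL x w /\ j %% t = 0 /\ occurs_at w y j) \/
   (exists w1 w2, inL x (w1 ++ w2) /\ prefix w2 y /\ suffix w1 y /\
                  size w1 %% t = 0)).
Proof.
move=> _ n_gt0 sx sy.
have le_wy w : inL x w -> size w <= size y by move/size_inL; rewrite sx sy.
have t_dvd_y : t %| size y by rewrite sy dvdn_mulr.
apply: (iff_trans (exists_Rot_mul (fun r => lexlt r x) n_gt0 sy)); split.
  case=> j [le_jy t_dvd_j /lexlt_inL [w xw]].
  case/(prefix_rot le_jy (le_wy _ xw)) => [occ | [w2 w2y def_w]].
    by left; exists w, j; split; [|split=> //; apply/eqP].
  right; exists (drop j y), w2; rewrite -def_w; split=> //; split=> //.
  by split; [apply: suffix_drop | apply/eqP; rewrite size_drop; exact: dvdn_sub].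
case=> [[w [j [xw [/eqP t_dvd_j occ]]]] | [w1 [w2 [xw [w2y [+ /eqP t_dvd_w1]]]]]].
  have le_jy : j <= size y by case: occ => /(leq_trans (leq_addr _ j)).
  exists j; split=> //; apply/lexlt_inL; exists w => //.
  by apply/(prefix_rot le_jy (le_wy _ xw)); left.
rewrite suffixE => /eqP def_w1.
exists (size y - size w1); split; [exact: leq_subr | exact: dvdn_sub |].
apply/lexlt_inL; exists (w1 ++ w2) => //.
by apply/(prefix_rot (leq_subr _ _) (le_wy _ xw)); right; exists w2; rewrite ?def_w1.
Qed.
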